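(* Let $\mathtt{L}=\{x,(x,u'),u'\}$ be a line of $\mathbb{S}$, where $(x,u')\in\mathcal{P}$, and let $\alpha$ be a point of $\mathbb{S}$ not on $\mathtt{L}$. Then there is exactly one point of $\mathtt{L}$ nearest to $\alpha$ (in the collinearity graph of $\mathbb{S}$).
   Context: Let $S=(P,L)$ and $S'=(P',L')$ be generalized quadrangles of order $(2,2)$ (every line has 3 points, every point lies on 3 lines, and for each point $x$ and line $l\not\ni x$ exactly one point of $l$ is collinear with $x$), with an isomorphism $x\mapsto x'$ from $S$ to $S'$. In a point-line geometry, $x^{\perp}$ is $x$ together with all points collinear with $x$, and $A^{\perp}=\bigcap_{a\in A}a^{\perp}$. A triad is a set of three pairwise non-collinear points, complete if $|T^{\perp}|=3$. Let $\mathcal{P}=\{(x,y')\in P\times P':y'\in x'^{\perp}\}$ and $\mathcal{L}$ the set of all $3$-subsets $\{(x,u'),(y,v'),(z,w')\}$ of $\mathcal{P}$ where $T=\{x,y,z\}$ (three distinct points) is a line or complete triad of $S$ and $\{u',v',w'\}=T'^{\perp}$ in $S'$ with $u',v',w'$ distinct. The geometry $\mathbb{S}=(\mathbb{P},\mathbb{L})$ has point set $\mathbb{P}=\mathcal{P}\cup P\cup P'$ (disjoint union) and line set $\mathcal{L}\cup\{\{x,(x,u'),u'\}:(x,u')\in\mathcal{P}\}$. *)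

From mathcomp Require Import all_boot.
Set Implicit Arguments. Unset Strict Implicit. Unset Printing Implicit Defensive.

Section Geometry.
Variables (P : finType) (Ls : {set {set P}}).

Definition coll (x y : P) : bool :=
  (x != y) && [exists l in Ls, (x \in l) && (y \in l)].

Definition perp (x : P) : {set P} := [set y | (y == x) || coll x y].

Definition perpS (A : {set P}) : {set P} := [set y | [forall a in A, y \in perp a]].

Definition is_gq22 : Prop :=
  [/\ forall l, l \in Ls -> #|l| = 3,
      forall x, #|[set l in Ls | x \in l]| = 3 &
      forall x l, l \in Ls -> x \notin l -> #|[set y in l | coll x y]| = 1].

Definition is_triad (T : {set P}) : bool :=
  (#|T| == 3) && [forall a in T, forall b in T, ~~ coll a b].

Definition complete_triad (T : {set P}) : bool :=
  is_triad T && (#|perpS T| == 3).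
End Geometry.

Definition is_iso (P P' : finType) (Ls : {set {set P}}) (Ls' : {set {set P'}})
  (f : P -> P') : Prop :=
  bijective f /\ forall l : {set P}, (l \in Ls) = (f @: l \in Ls').

Section BigS.
Variables (P P' : finType) (Ls : {set {set P}}) (Ls' : {set {set P'}}) (f : P -> P').

Definition calP (x : P) (y : P') : bool := y \in perp Ls' (f x).

(* ambient type for the disjoint union calP ⊎ P ⊎ P' *)
Definition bigT : finType := ((P + P') + (P * P'))%type.

Definition embP (x : P) : bigT := inl (inl x).
Definition embP' (y : P') : bigT := inl (inr y).
Definition embPair (x : P) (y : P') : bigT := inr (x, y).

Definition isPt (z : bigT) : bool :=
  match z with inr (x, y) => calP x y | _ => true end.

Definition in_calL (Lc : {set bigT}) : Prop :=
  exists (x y z : P) (u v w : P'),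
    [/\ Lc = [set embPair x u; embPair y v; embPair z w],
        [&& calP x u, calP y v & calP z w],
        [&& x != y, y != z & x != z],
        [&& u != v, v != w & u != w] &
        ([set x; y; z] \in Ls \/ complete_triad Ls [set x; y; z]) /\
        [set u; v; w] = perpS Ls' (f @: [set x; y; z])].

Definition triv_line (x : P) (u : P') : {set bigT} :=
  [set embP x; embPair x u; embP' u].

Definition isLine (Lc : {set bigT}) : Prop :=
  in_calL Lc \/ exists x u, calP x u /\ Lc = triv_line x u.

Definition bcoll (a b : bigT) : Prop :=
  a <> b /\ exists Lc, isLine Lc /\ a \in Lc /\ b \in Lc.

Inductive walk : bigT -> bigT -> nat -> Prop :=
| walk0 a : walk a a 0
| walkS a b c n : bcoll a b -> walk b c n -> walk a c n.+1.

Definition dist_le (a b : bigT) (n : nat) : Prop :=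
  exists m, m <= n /\ walk a b m.

(* d(a,p) <= d(a,q) in N ∪ {oo} *)
Definition dist_leq (a p q : bigT) : Prop :=
  forall n, dist_le a q n -> dist_le a p n.
End BigS.

From Pilot Require Import Defs.
From mathcomp Require Import all_boot.
Set Implicit Arguments. Unset Strict Implicit. Unset Printing Implicit Defensive.

(* Collinearity in S is explicit: x ~ u' and x ~ (x,u') ~ u' exactly when
   u' is in x'^perp, and (a,v') ~ (b,w') exactly when a <> b, v' <> w' and
   v', w' lie in {a',b'}^perp.  The "if" direction of the last clause holds
   because in GQ(2,2) the trace {a',b'}^perp of two non-collinear points has
   three points and every pair of points is regular, so {a', b'} extends to a
   line or a complete triad whose perp contains v' and w'.  Hence a point
   alpha off L is at distance 1 or 2 from L, and inspecting the paths of
   length at most 2 shows that only one point of L is at that distance.  The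
   one non-trivial exclusion, a path (a,v') ~ (b,w') ~ (x,u') when exactly one
   of u' in a'^perp, v' in x'^perp holds, contradicts regularity again. *)

Section ThreeElementSets.
Variable T : finType.
Implicit Types (A : {set T}) (a b c : T).

Lemma in_set3 a b c y : (y \in [set a; b; c]) = [|| y == a, y == b | y == c].
Proof. by rewrite !inE orbA. Qed.

Lemma card_set3 a b c : (#|[set a; b; c]| == 3) = [&& a != b, b != c & a != c].
Proof.
rewrite -setUA cardsU1 cards2 !inE negb_or.
by case: (a != b); case: (b != c); case: (a != c).
Qed.

Lemma card3_third A a b : #|A| = 3 -> a != b ->
  exists2 c, c \in A & [&& a != b, b != c & a != c].
Proof.
move=> A3 ab; have: 0 < #|A :\: [set a; b]|.
  rewrite cardsD A3 subn_gt0 (leq_ltn_trans (subset_leq_card (subsetIr A _))) //.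
  by rewrite cards2; case: (a != b).
case/card_gt0P => c; rewrite !inE negb_or => /andP[/andP[ca cb] cA].
by exists c; rewrite // ab !(eq_sym _ c) ca cb.
Qed.

Lemma set3_card3 A a b c : #|A| = 3 -> a \in A -> b \in A -> c \in A ->
  [&& a != b, b != c & a != c] -> [set a; b; c] = A.
Proof.
move=> A3 aA bA cA; rewrite -card_set3 => /eqP abc3.
apply/eqP; rewrite eqEcard A3 abc3 leqnn andbT.
by apply/subsetP => y; rewrite in_set3 => /or3P[]/eqP->.
Qed.

End ThreeElementSets.

Section Collinearity.
Variables (P : finType) (Ls : {set {set P}}).
Local Notation coll := (coll Ls).
Local Notation perp := (perp Ls).
Local Notation perpS := (perpS Ls).
Implicit Types (l : {set P}) (x y : P).

Lemma coll_line l x y : l \in Ls -> x \in l -> y \in l -> x != y -> coll x y.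
Proof. by move=> lL xl yl xy; rewrite /coll xy; apply/exists_inP; exists l; rewrite ?xl. Qed.

Lemma line_of_coll x y : coll x y -> exists2 l, l \in Ls & (x \in l) && (y \in l).
Proof. by case/andP=> _ /exists_inP. Qed.

Lemma coll_sym x y : coll x y = coll y x.
Proof.
rewrite /Defs.coll eq_sym; congr (_ && _).
by apply: eq_existsb => l; rewrite (andbC (x \in l)).
Qed.

Lemma perp_sym x y : (y \in perp x) = (x \in perp y).
Proof. by rewrite !inE eq_sym coll_sym. Qed.

Lemma perp_refl x : x \in perp x.
Proof. by rewrite inE eqxx. Qed.

Lemma perp_coll x y : y \in perp x -> y != x -> coll x y.
Proof. by rewrite inE => /orP[/eqP->|]; rewrite ?eqxx. Qed.

Lemma line_perp l x y : l \in Ls -> x \in l -> y \in l -> y \in perp x.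
Proof.
move=> lL xl yl; rewrite inE; case: eqVneq => //= yx.
by apply: coll_line lL xl yl _; rewrite eq_sym.
Qed.

Lemma perpSU A B : perpS (A :|: B) = perpS A :&: perpS B.
Proof.
apply/setP => y; rewrite !inE; apply/forall_inP/andP => [yAB|[yA yB] t].
  by split; apply/forall_inP => t tX; apply: yAB; rewrite inE tX ?orbT.
by rewrite inE => /orP[]; [move/forall_inP: yA; apply | move/forall_inP: yB; apply].
Qed.

Lemma perpS1 x : perpS [set x] = perp x.
Proof.
apply/setP => y; rewrite inE.
by apply/forall_inP/idP => [|yx t /set1P ->] //; apply; rewrite inE.
Qed.

Lemma in_perpS2 x y z : (z \in perpS [set x; y]) = (z \in perp x) && (z \in perp y).
Proof. by rewrite perpSU !perpS1 inE. Qed.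

Lemma is_triad3 x y z : y \notin perp x -> z \notin perp x -> z \notin perp y ->
  is_triad Ls [set x; y; z].
Proof.
have ncoll s t : t \notin perp s -> (s != t) && ~~ coll s t && ~~ coll t s.
  by rewrite inE negb_or coll_sym eq_sym => /andP[-> ->].
move=> /ncoll/andP[/andP[xy xy'] yx'] /ncoll/andP[/andP[xz xz'] zx'].
move=> /ncoll/andP[/andP[yz yz'] zy'].
rewrite /is_triad card_set3 xy yz xz /=.
have coll_irr s : coll s s = false by rewrite /Defs.coll eqxx.
by apply/forall_inP => s; rewrite in_set3 => /or3P[]/eqP->; apply/forall_inP => t;
  rewrite in_set3 => /or3P[]/eqP->; rewrite ?coll_irr.
Qed.

End Collinearity.

Arguments coll_sym {P Ls} x y.
Arguments perp_sym {P Ls} x y.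

Section GQ22.
Variables (P : finType) (Ls : {set {set P}}).
Hypothesis HS : is_gq22 Ls.
Local Notation coll := (coll Ls).
Local Notation perp := (perp Ls).
Local Notation perpS := (perpS Ls).
Local Notation trace x y := (perpS [set x; y]).
Local Notation lines_at x := [set l in Ls | x \in l].
Implicit Types (l : {set P}) (a b c p q x y z : P).

Lemma card_line l : l \in Ls -> #|l| = 3.
Proof. by case: HS => H _ _ /H. Qed.

Lemma card_lines_at x : #|lines_at x| = 3.
Proof. by case: HS. Qed.

Lemma exists_line_at x : exists2 l, l \in Ls & x \in l.
Proof.
have : 0 < #|lines_at x| by rewrite card_lines_at.
by case/card_gt0P => l; rewrite inE => /andP[]; exists l.
Qed.

Lemma coll_on_line_set1 l y : l \in Ls -> y \notin l ->
  exists z, [set z in l | coll y z] = [set z].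
Proof. by case: HS => _ _ gq lL yNl; apply/cards1P/eqP/gq. Qed.

Lemma exists_perp_on_line l y : l \in Ls -> exists2 z, z \in l & z \in perp y.
Proof.
move=> lL; have [yl|yNl] := boolP (y \in l); first by exists y; rewrite ?perp_refl.
have [z Ez] := coll_on_line_set1 lL yNl.
have : z \in [set z in l | coll y z] by rewrite Ez set11.
by rewrite !inE => /andP[zl yz]; exists z; rewrite // inE yz orbT.
Qed.

Lemma perp_on_line_uniq l y z1 z2 : l \in Ls -> y \notin l ->
  z1 \in l -> z2 \in l -> z1 \in perp y -> z2 \in perp y -> z1 = z2.
Proof.
move=> lL yNl z1l z2l yz1 yz2.
have coll_y z : z \in l -> z \in perp y -> z \in [set z in l | coll y z].
  move=> zl yz; rewrite inE zl perp_coll //.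
  by apply: contraNneq yNl => <-.
have [z Ez] := coll_on_line_set1 lL yNl.
by move: (coll_y _ z1l yz1) (coll_y _ z2l yz2); rewrite Ez !inE => /eqP-> /eqP->.
Qed.

Lemma perp2_line l a b y : l \in Ls -> a \in l -> b \in l -> a != b ->
  y \in perp a -> y \in perp b -> y \in l.
Proof.
move=> lL al bl ab ya yb; apply: contraTT ab => yNl; rewrite negbK.
by apply/eqP/(perp_on_line_uniq lL yNl); rewrite // perp_sym.
Qed.

Lemma line_eq l1 l2 a b : l1 \in Ls -> l2 \in Ls -> a \in l1 -> b \in l1 ->
  a \in l2 -> b \in l2 -> a != b -> l1 = l2.
Proof.
move=> l1L l2L al1 bl1 al2 bl2 ab; apply/eqP.
rewrite eq_sym eqEcard (card_line l1L) (card_line l2L) leqnn andbT.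
by apply/subsetP => y yl2; apply: (perp2_line l1L al1 bl1 ab); apply: line_perp yl2.
Qed.

Lemma trace_line l a b : l \in Ls -> a \in l -> b \in l -> a != b -> trace a b = l.
Proof.
move=> lL al bl ab; apply/setP => y; rewrite in_perpS2.
apply/andP/idP => [[ya yb]|yl]; first exact: perp2_line ya yb.
by rewrite !(line_perp lL) //.
Qed.

Lemma trace_coll_line x y :
  coll x y -> [/\ trace x y \in Ls, x \in trace x y & y \in trace x y].
Proof.
move=> xy; have [l lL /andP[xl yl]] := line_of_coll xy.
by rewrite (trace_line lL xl yl) //; case/andP: xy.
Qed.

Lemma exists_common_perp a b : exists2 w, w \in perp a & w \in perp b.
Proof.
have [l lL al] := exists_line_at a; have [w wl wb] := exists_perp_on_line b lL.
by exists w; rewrite ?(line_perp lL al wl).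
Qed.

Section Opposite.
Variables p q : P.
Hypothesis pq : q \notin perp p.

Lemma trace_opposite y1 y2 : y1 \in trace p q -> y2 \in trace p q -> y1 != y2 ->
  y2 \notin perp y1.
Proof.
rewrite !in_perpS2 => /andP[y1p y1q] /andP[y2p y2q] y12; apply: contra pq => y12perp.
have y21 : y2 != y1 by rewrite eq_sym.
have [l lL /andP[y1l y2l]] := line_of_coll (perp_coll y12perp y21).
have in_l z : z \in perp y1 -> z \in perp y2 -> z \in l by apply: perp2_line y1l y2l y12.
by apply: (line_perp lL); apply: in_l; rewrite perp_sym.
Qed.

Lemma card_trace : #|trace p q| = 3.
Proof.
have trace_neq y : y \in trace p q -> y != p.
  by rewrite in_perpS2 => /andP[_]; apply: contraTneq => ->; rewrite perp_sym.
have trace_coll y : y \in trace p q -> coll p y.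
  by move=> yT; apply: perp_coll (trace_neq _ yT); move: yT; rewrite in_perpS2 => /andP[].
have lines_atE : [set trace p y | y in trace p q] = lines_at p.
  apply/setP => l; apply/imsetP/idP => [[y yT ->]|].
    by have [tL pt _] := trace_coll_line (trace_coll _ yT); rewrite inE tL pt.
  rewrite inE => /andP[lL pl]; have [y yl yq] := exists_perp_on_line q lL.
  have yT : y \in trace p q by rewrite in_perpS2 yq (line_perp lL pl yl).
  by exists y => //; rewrite (trace_line lL pl yl) // eq_sym trace_neq.
rewrite -(card_lines_at p) -lines_atE card_in_imset // => y1 y2 y1T y2T E.
have [tL pt y1t] := trace_coll_line (trace_coll _ y1T).
have [_ _ y2t] := trace_coll_line (trace_coll _ y2T).
have qNt : q \notin trace p y1 by apply: contra pq; apply: line_perp tL pt.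
rewrite -E in y2t; move: y1T y2T; rewrite !in_perpS2 => /andP[_ y1q] /andP[_ y2q].
exact: perp_on_line_uniq tL qNt y1t y2t y1q y2q.
Qed.

End Opposite.

Lemma three_lines_at c y1 y2 y3 y4 : coll c y1 -> coll c y2 -> coll c y3 -> coll c y4 ->
  y2 \notin perp y1 -> y3 \notin perp y1 -> y3 \notin perp y2 ->
  [|| y4 \in perp y1, y4 \in perp y2 | y4 \in perp y3].
Proof.
move=> c1 c2 c3 c4 n12 n13 n23.
have at_c y : coll c y -> trace c y \in lines_at c.
  by case/trace_coll_line => tL ct _; rewrite inE tL ct.
have neq y y' : coll c y -> coll c y' -> y' \notin perp y -> trace c y != trace c y'.
  move=> cy cy'; apply: contraNneq => E.
  have [tL _ yt] := trace_coll_line cy; have [_ _ y't] := trace_coll_line cy'.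
  by rewrite -E in y't; apply: line_perp tL yt y't.
have := set3_card3 (card_lines_at c) (at_c _ c1) (at_c _ c2) (at_c _ c3).
rewrite !neq // => /(_ isT) E.
have := at_c _ c4; rewrite -E in_set3.
have [_ _ y4t] := trace_coll_line c4.
have on_line y : coll c y -> y4 \in trace c y -> y4 \in perp y.
  by case/trace_coll_line => tL _ yt; apply: line_perp tL yt.
case/or3P => /eqP tE; rewrite tE in y4t; apply/or3P;
  [apply: Or31 | apply: Or32 | apply: Or33]; exact: on_line y4t.
Qed.

Lemma no_triangle l1 l2 r y1 y2 : l1 \in Ls -> l2 \in Ls -> l1 != l2 ->
  r \in l1 -> y1 \in l1 -> r \in l2 -> y2 \in l2 -> y1 != r -> y2 != r ->
  y2 \notin perp y1.
Proof.
move=> l1L l2L l12 rl1 y1l1 rl2 y2l2 y1r y2r; apply: contra l12 => y2y1.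
have y2l1 := perp2_line l1L y1l1 rl1 y1r y2y1 (line_perp l2L rl2 y2l2).
by apply/eqP/(line_eq l1L l2L rl1 y2l1 rl2 y2l2); rewrite eq_sym.
Qed.

Lemma perp_line_opposite l r s t z : l \in Ls -> r \in l -> t \in l -> z \in l ->
  r \notin perp s -> t \in perp s -> z \in perp s -> z = t.
Proof.
move=> lL rl tl zl rs ts zs.
have sNl : s \notin l by apply: contra rs => sl; apply: line_perp lL sl rl.
exact: perp_on_line_uniq lL sNl zl tl zs ts.
Qed.

(* Were c not collinear with r, the points a1 of the
   line a r and b1 of the line b r collinear with c would both lie on the third
   line through c (besides c p and c q), and a1, b1, r would form a triangle. *)
Lemma regularity a b p q r c : b \notin perp a ->
  p \in trace a b -> q \in trace a b -> r \in trace a b -> [&& p != q, q != r & p != r] ->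
  c \in perp p -> c \in perp q -> c \notin [set a; b] -> c \in perp r.
Proof.
move=> ab pT qT rT /and3P[pq qr pr] cp cq; rewrite in_set2 negb_or => /andP[ca cb].
have opp := trace_opposite ab.
have qNp := opp _ _ pT qT pq; have rNp := opp _ _ pT rT pr; have rNq := opp _ _ qT rT qr.
move: (pT) (qT) (rT); rewrite !in_perpS2 => /andP[pa pb] /andP[qa qb] /andP[ra rb].
have cpq : c \in trace p q by rewrite in_perpS2 cp cq.
have ap : a \in perp p by rewrite perp_sym.
have aq : a \in perp q by rewrite perp_sym.
have bp : b \in perp p by rewrite perp_sym.
have bq : b \in perp q by rewrite perp_sym.
have apq : a \in trace p q by rewrite in_perpS2 ap aq.
have bpq : b \in trace p q by rewrite in_perpS2 bp bq.
have aNc : a \notin perp c := trace_opposite qNp cpq apq ca.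
have bNc : b \notin perp c := trace_opposite qNp cpq bpq cb.
case: (boolP (c \in perp r)) => // cNr; have rNc : r \notin perp c by rewrite perp_sym.
have ra' : r != a by apply: contraNneq ab => <-; rewrite perp_sym.
have rb' : r != b by apply: contraNneq ab => <-.
have [l1L al1 rl1] := trace_coll_line (perp_coll ra ra').
have [l2L bl2 rl2] := trace_coll_line (perp_coll rb rb').
have [a1 a1l a1c] := exists_perp_on_line c l1L.
have [b1 b1l b1c] := exists_perp_on_line c l2L.
have a1r : a1 != r by apply: contraTneq a1c => ->.
have b1r : b1 != r by apply: contraTneq b1c => ->.
have off_a1 s : r \notin perp s -> a \in perp s -> a1 \notin perp s.
  move=> rs sa; apply: contra aNc => a1s.
  by rewrite -(perp_line_opposite l1L rl1 al1 a1l rs sa a1s).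
have off_b1 s : r \notin perp s -> b \in perp s -> b1 \notin perp s.
  move=> rs sb; apply: contra bNc => b1s.
  by rewrite -(perp_line_opposite l2L rl2 bl2 b1l rs sb b1s).
have cNl1 : c \notin trace a r by apply: contra cNr => /(line_perp l1L rl1).
have cNl2 : c \notin trace b r by apply: contra cNr => /(line_perp l2L rl2).
have cp' : coll c p.
  by apply: perp_coll; [rewrite perp_sym | apply: contraNneq qNp => ->; rewrite perp_sym].
have cq' : coll c q by apply: perp_coll; [rewrite perp_sym | apply: contraNneq qNp => ->].
have ca1 : coll c a1 by apply: perp_coll a1c _; apply: contraNneq cNl1 => <-.
have cb1 : coll c b1 by apply: perp_coll b1c _; apply: contraNneq cNl2 => <-.
have := three_lines_at cp' cq' ca1 cb1 qNp (off_a1 _ rNp ap) (off_a1 _ rNq aq).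
rewrite (negbTE (off_b1 _ rNp bp)) (negbTE (off_b1 _ rNq bq)) /=.
have l12 : trace a r != trace b r.
  by apply: contraNneq ab => l12; rewrite (line_perp l1L al1) ?l12.
by rewrite (negbTE (no_triangle l1L l2L l12 rl1 a1l rl2 b1l a1r b1r)).
Qed.

Lemma perp_trace_third v w a b x u : v != w ->
  a \in trace v w -> b \in trace v w -> x \in trace v w -> [&& a != b, b != x & a != x] ->
  u \in perp b -> u \in perp x -> u \in perp a.
Proof.
move=> vw aT bT xT /and3P[ab bx ax] ub ux.
have [wv|wNv] := boolP (w \in perp v).
  have wv' : w != v by rewrite eq_sym.
  have [tL _ _] := trace_coll_line (perp_coll wv wv').
  by apply: line_perp tL aT (perp2_line tL bT xT bx ub ux).
have xNb := trace_opposite wNv bT xT bx.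
move: aT bT xT; rewrite !in_perpS2 => /andP[av aw] /andP[bv bw] /andP[xv xw].
have [->|uv] := eqVneq u v; first by rewrite perp_sym.
have [->|uw] := eqVneq u w; first by rewrite perp_sym.
have vT : v \in trace b x by rewrite in_perpS2 perp_sym bv perp_sym xv.
have wT : w \in trace b x by rewrite in_perpS2 perp_sym bw perp_sym xw.
have uT : u \in trace b x by rewrite in_perpS2 ub ux.
rewrite perp_sym; apply: (regularity xNb vT wT uT) => //.
  by rewrite vw eq_sym uw eq_sym uv.
by rewrite in_set2 negb_or ab ax.
Qed.

Lemma trace_completion a b v w : a != b -> v != w -> v \in trace a b -> w \in trace a b ->
  exists c z, [/\ [&& a != b, b != c & a != c], [&& v != w, w != z & v != z],
    [set a; b; c] \in Ls \/ complete_triad Ls [set a; b; c] &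
    perpS [set a; b; c] = [set v; w; z]].
Proof.
move=> ab vw vT wT.
have perpS3 c : perpS [set a; b; c] = trace a b :&: perp c by rewrite perpSU perpS1.
have [ba|bNa] := boolP (b \in perp a).
  have ba' : b != a by rewrite eq_sym.
  have [tL aT bT] := trace_coll_line (perp_coll ba ba').
  have [c cT abc] := card3_third (card_line tL) ab.
  have [z zT vwz] := card3_third (card_line tL) vw.
  exists c, z; rewrite perpS3 (set3_card3 (card_line tL) aT bT cT abc).
  split => //; first by left.
  rewrite (set3_card3 (card_line tL) vT wT zT vwz); apply/setIidPl/subsetP => y.
  exact: line_perp tL cT.
have [z zT vwz] := card3_third (card_trace bNa) vw.
have tE : trace a b = [set v; w; z] by rewrite (set3_card3 (card_trace bNa) vT wT zT vwz).
have wNv := trace_opposite bNa vT wT vw.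
move: (vT) (wT); rewrite !in_perpS2 => /andP[va vb] /andP[wa wb].
have aT : a \in trace v w by rewrite in_perpS2 perp_sym va perp_sym wa.
have bT : b \in trace v w by rewrite in_perpS2 perp_sym vb perp_sym wb.
have [c cT abc] := card3_third (card_trace wNv) ab.
have := cT; rewrite in_perpS2 => /andP[cv cw].
have cz : c \in perp z.
  apply: regularity bNa vT wT zT vwz cv cw _.
  by case/and3P: abc => _ bc ac; rewrite in_set2 negb_or !(eq_sym c) ac bc.
have pE : perpS [set a; b; c] = [set v; w; z].
  rewrite perpS3 tE; apply/setIidPl/subsetP => y.
  by rewrite in_set3 => /or3P[]/eqP->; rewrite perp_sym.
exists c, z; split => //; right; rewrite /complete_triad pE card_set3 vwz andbT.
move: abc => /and3P[_ bc ac].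
by rewrite is_triad3 // ?(trace_opposite wNv aT cT ac) ?(trace_opposite wNv bT cT bc).
Qed.

End GQ22.

Section Isomorphism.
Variables (P P' : finType) (Ls : {set {set P}}) (Ls' : {set {set P'}}) (f : P -> P').
Hypothesis Hf : is_iso Ls Ls' f.

Lemma iso_inj : injective f.
Proof. by case: Hf => /bij_inj. Qed.

Lemma iso_coll a b : coll Ls' (f a) (f b) = coll Ls a b.
Proof.
have [[g fK gK] lineE] := Hf.
rewrite /Defs.coll (inj_eq iso_inj); congr (_ && _).
apply/exists_inP/exists_inP => [[l' l'L /andP[al' bl']]|[l lL /andP[al bl]]].
  have l'E : f @: (g @: l') = l' by rewrite -imset_comp (eq_imset _ gK) imset_id.
  exists (g @: l'); first by rewrite lineE l'E.
  by rewrite -(fK a) -(fK b) !imset_f.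
by exists (f @: l); rewrite -?lineE ?imset_f.
Qed.

Lemma iso_perp a y : (f y \in perp Ls' (f a)) = (y \in perp Ls a).
Proof. by rewrite !inE (inj_eq iso_inj) iso_coll. Qed.

Lemma iso_perpS (T : {set P}) : perpS Ls' (f @: T) = f @: perpS Ls T.
Proof.
have [[g fK gK] _] := Hf.
apply/setP => y'; rewrite -(gK y') (mem_imset _ _ iso_inj) !inE.
apply/forall_inP/forall_inP => [yT a aT|yT _ /imsetP[a aT ->]].
  by rewrite -iso_perp; apply: yT; apply: imset_f.
by rewrite iso_perp; apply: yT.
Qed.

Lemma iso_complete_triad (T : {set P}) :
  complete_triad Ls' (f @: T) = complete_triad Ls T.
Proof.
rewrite /complete_triad /is_triad iso_perpS !(card_imset _ iso_inj); congr (_ && _ && _).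
apply/forall_inP/forall_inP => [ncoll a aT|ncoll _ /imsetP[a aT ->]].
  apply/forall_inP => b bT; rewrite -iso_coll.
  by move/forall_inP: (ncoll _ (imset_f f aT)); apply; apply: imset_f.
apply/forall_inP => _ /imsetP[b bT ->].
by rewrite iso_coll; move/forall_inP: (ncoll a aT); apply.
Qed.

End Isomorphism.

Section Adjacency.
Variables (P P' : finType) (Ls : {set {set P}}) (Ls' : {set {set P'}}) (f : P -> P').
Local Notation bigT := (bigT P P').
Local Notation calP := (calP Ls' f).
Local Notation bcoll := (bcoll Ls Ls' f).

Definition adj (alpha beta : bigT) : bool :=
  match alpha, beta with
  | inl (inl a), inl (inr v) | inl (inr v), inl (inl a) => calP a v
  | inl (inl a), inr (b, v) | inr (b, v), inl (inl a) => (a == b) && calP b v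
  | inl (inr w), inr (b, v) | inr (b, v), inl (inr w) => (w == v) && calP b v
  | inr (a, v), inr (b, w) =>
    [&& a != b, v != w, calP a v && calP b v & calP a w && calP b w]
  | _, _ => false
  end.

Lemma bcoll_adj alpha beta : bcoll alpha beta -> adj alpha beta.
Proof.
case=> ab [Lc [[calL|[x [u [xu ->]]]] [aL bL]]]; last first.
  move/eqP: ab; move: aL bL; rewrite !in_set3 => /or3P[]/eqP-> /or3P[]/eqP->;
  by rewrite ?eqxx //= ?eqxx xu.
case: calL => [x [y [z [u [v [w [ELc _ /and3P[xy yz xz] /and3P[uv vw uw] [_ ET']]]]]]]].
have pT s t : s \in [set u; v; w] -> t \in [set x; y; z] -> calP t s.
  by rewrite ET' inE => /forall_inP sT tT; apply/sT/imset_f.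
have /and3P[yx zy zx] : [&& y != x, z != y & z != x].
  by rewrite eq_sym xy eq_sym yz eq_sym xz.
have /and3P[vu wv wu] : [&& v != u, w != v & w != u].
  by rewrite eq_sym uv eq_sym vw eq_sym uw.
move/eqP: ab; move: aL bL; rewrite ELc !in_set3 => /or3P[]/eqP-> /or3P[]/eqP->;
  rewrite ?eqxx //= !pT ?in_set3 ?eqxx ?orbT // !andbT => _; exact/andP.
Qed.

Lemma triv_bcoll x u p q : calP x u -> p \in triv_line x u -> q \in triv_line x u ->
  p != q -> bcoll p q.
Proof.
move=> xu pL qL /eqP pq; split=> //.
by exists (triv_line x u); split=> //; right; exists x, u.
Qed.

Hypotheses (HS' : is_gq22 Ls') (Hf : is_iso Ls Ls' f).

Lemma pair_bcoll a v b w : adj (embPair a v) (embPair b w) ->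
  bcoll (embPair a v) (embPair b w).
Proof.
move=> /and4P[ab vw /andP[av bv] /andP[aw bw]].
have vT : v \in perpS Ls' [set f a; f b] by rewrite in_perpS2; apply/andP.
have wT : w \in perpS Ls' [set f a; f b] by rewrite in_perpS2; apply/andP.
have [[g fK gK] lineE] := Hf.
have fab : f a != f b by rewrite (inj_eq (iso_inj Hf)).
have [c' [z [abc vwz Tc pE]]] := trace_completion HS' fab vw vT wT.
have imE : f @: [set a; b; g c'] = [set f a; f b; c'].
  by rewrite !imsetU !imset_set1 /= gK.
have zc : calP (g c') z.
  have : z \in perpS Ls' [set f a; f b; c'] by rewrite pE in_set3 eqxx !orbT.
  by rewrite perpSU perpS1 inE /calP gK => /andP[].
split; first by case=> /eqP; rewrite (negbTE ab).
exists [set embPair a v; embPair b w; embPair (g c') z].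
split; last by rewrite !in_set3 !eqxx ?orbT.
left; exists a, b, (g c'), v, w, z; split=> //; first exact/and3P.
  have inj := iso_inj Hf.
  by move: abc; rewrite -(inj_eq inj b) -(inj_eq inj a (g c')) gK (inj_eq inj).
by rewrite lineE -(iso_complete_triad Hf) imE pE.
Qed.

Lemma bcollP alpha beta : bcoll alpha beta <-> adj alpha beta.
Proof.
split; first exact: bcoll_adj.
case: alpha beta => [[a|v]|[a v]] [[b|w]|[b w]] //=.
- by move=> aw; apply: (triv_bcoll aw); rewrite ?in_set3 ?eqxx ?orbT.
- by case/andP=> /eqP<- aw; apply: (triv_bcoll aw); rewrite ?in_set3 ?eqxx ?orbT.
- by move=> bv; apply: (triv_bcoll bv); rewrite ?in_set3 ?eqxx ?orbT.
- by case/andP=> /eqP-> bw; apply: (triv_bcoll bw); rewrite ?in_set3 ?eqxx ?orbT.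
- by case/andP=> /eqP-> av; apply: (triv_bcoll av); rewrite ?in_set3 ?eqxx ?orbT.
- by case/andP=> /eqP-> av; apply: (triv_bcoll av); rewrite ?in_set3 ?eqxx ?orbT.
exact: pair_bcoll.
Qed.

End Adjacency.

Section Distance.
Variables (P P' : finType) (Ls : {set {set P}}) (Ls' : {set {set P'}}) (f : P -> P').
Hypotheses (HS' : is_gq22 Ls') (Hf : is_iso Ls Ls' f).
Local Notation bigT := (bigT P P').
Local Notation calP := (calP Ls' f).
Local Notation adj := (adj Ls' f).
Local Notation walk := (walk Ls Ls' f).
Local Notation dist_leq := (dist_leq Ls Ls' f).

Definition adj2 (alpha gamma : bigT) : bool :=
  [exists beta, adj alpha beta && adj beta gamma].

Definition unique_nearest (L : {set bigT}) (alpha : bigT) : Prop :=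
  exists! p, p \in L /\ forall q, q \in L -> dist_leq alpha p q.

Lemma walk_inv alpha gamma n : walk alpha gamma n ->
  if n is m.+1 then exists2 beta, adj alpha beta & walk beta gamma m else alpha = gamma.
Proof. by case=> // a b c m /bcoll_adj ab bc; exists b. Qed.

Lemma walk1_adj alpha gamma : walk alpha gamma 1 -> adj alpha gamma.
Proof. by case/walk_inv => beta + /walk_inv <-. Qed.

Lemma walk2_adj2 alpha gamma : walk alpha gamma 2 -> adj2 alpha gamma.
Proof.
by case/walk_inv => beta ab /walk1_adj bg; apply/existsP; exists beta; rewrite ab.
Qed.

Section NearestPoint.
Variables (L : {set bigT}) (alpha : bigT).

Lemma unique_nearest_walk p k : p \in L -> walk alpha p k ->
  (forall q, q \in L -> q != p -> forall m, m <= k -> ~ walk alpha q m) ->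
  unique_nearest L alpha.
Proof.
move=> pL wp far; exists p; split.
  split=> // q qL n [m [mn wq]].
  have [<-|qp] := eqVneq q p; first by exists m.
  case: (leqP k m) => [km|mk]; first by exists k; split=> //; apply: leq_trans km mn.
  by case: (far q qL qp m (ltnW mk)).
move=> p' [p'L nearest].
have [m [mk wp']] := nearest p pL k (ex_intro _ k (conj (leqnn k) wp)).
by case: (eqVneq p' p) => [->//|p'p]; case: (far p' p'L p'p m mk wp').
Qed.

Lemma unique_nearest_at1 p : alpha \notin L -> p \in L -> adj alpha p ->
  (forall q, q \in L -> q != p -> ~~ adj alpha q) -> unique_nearest L alpha.
Proof.
move=> aNL pL /(bcollP HS' Hf) ap far.
apply: (unique_nearest_walk pL (walkS ap (walk0 _ _ _ _))) => q qL qp [|[|//]] _.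
  by move/walk_inv => aq; rewrite aq qL in aNL.
by move/walk1_adj; apply/negP/far.
Qed.

Lemma unique_nearest_at2 beta p : alpha \notin L -> p \in L ->
  adj alpha beta -> adj beta p ->
  (forall q, q \in L -> q != p -> ~~ adj alpha q && ~~ adj2 alpha q) ->
  unique_nearest L alpha.
Proof.
move=> aNL pL /(bcollP HS' Hf) ab /(bcollP HS' Hf) bp far.
apply: (unique_nearest_walk pL (walkS ab (walkS bp (walk0 _ _ _ _)))) => q qL qp.
have /andP[/negP nq /negP n2q] := far q qL qp.
case=> [|[|[|//]]] _.
- by move/walk_inv => aq; rewrite aq qL in aNL.
- by move/walk1_adj.
- by move/walk2_adj2.
Qed.

End NearestPoint.

Lemma adj2_P_P' a u : adj2 (embP P' a) (embP' P u) -> calP a u.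
Proof.
case/existsP=> [[[b|w]|[b w]]] //=; rewrite ?andbF //.
by case/and3P=> /andP[/eqP<- _] /eqP->.
Qed.

Lemma adj2_P_pair a x u : adj2 (embP P' a) (embPair x u) -> calP a u.
Proof.
case/existsP=> [[[b|w]|[b w]]] //=; rewrite ?andbF //; first by case/and3P=> aw /eqP<-.
by case/and5P=> /andP[/eqP<- _] _ _ _ /andP[].
Qed.

Lemma adj2_P'_P v x : adj2 (embP' P v) (embP P' x) -> calP x v.
Proof.
case/existsP=> [[[b|w]|[b w]]] //=; rewrite ?andbF //.
by case/and3P=> /andP[/eqP-> _] /eqP->.
Qed.

Lemma adj2_P'_pair v x u : adj2 (embP' P v) (embPair x u) -> calP x v.
Proof.
case/existsP=> [[[b|w]|[b w]]] //=; rewrite ?andbF //; first by case/and3P=> bv /eqP<-.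
by case/and5P=> /andP[/eqP-> _] _ _ /andP[].
Qed.

Lemma adj2_pair_P a v x : adj2 (embPair a v) (embP P' x) -> calP x v.
Proof.
case/existsP=> [[[b|w]|[b w]]] //=; rewrite ?andbF //; first by case/andP=> /andP[/eqP->].
by case/and3P=> /and4P[_ _ /andP[_ +] _] /eqP->.
Qed.

Lemma adj2_pair_P' a v u : adj2 (embPair a v) (embP' P u) -> calP a u.
Proof.
case/existsP=> [[[b|w]|[b w]]] //=; rewrite ?andbF //; first by case/andP=> /andP[/eqP<-].
by case/and3P=> /and4P[_ _ _ /andP[+ _]] /eqP->.
Qed.

Lemma adj2_pair_pair a v x u : adj2 (embPair a v) (embPair x u) -> calP a u = calP x v.
Proof.
case/existsP=> [[[b|w]|[b w]]] //=; rewrite ?andbF //.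
- by case/and3P=> /andP[/eqP ba av] /eqP bx xu; subst; rewrite av xu.
- by case/and3P=> /andP[/eqP wv av] /eqP wu xu; subst; rewrite av xu.
case/andP=> /and4P[ab vw /andP[av bv] /andP[aw bw]].
case/and4P=> bx wu /andP[_ xw] /andP[bu xu].
have [xa|ax] := eqVneq a x; first by subst; rewrite av xu.
have inT z s t : s \in perp Ls' z -> t \in perp Ls' z -> z \in perpS Ls' [set s; t].
  by move=> sz tz; rewrite in_perpS2 (perp_sym s z) (perp_sym t z) sz tz.
have inj := iso_inj Hf.
(* a', b', x' are three points of {u', w'}^perp, resp. of {v', w'}^perp. *)
apply/idP/idP => [au|xv].
  apply: (perp_trace_third HS' (v := u) (w := w) (b := f a) (x := f b)) => //; try exact: inT.
  - by rewrite eq_sym.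
  - by rewrite !(inj_eq inj) eq_sym ax ab eq_sym bx.
apply: (perp_trace_third HS' (v := v) (w := w) (b := f b) (x := f x)) => //; try exact: inT.
by rewrite !(inj_eq inj) ab bx ax.
Qed.

Section TrivialLine.
Variables (x : P) (u : P').
Hypothesis xu : calP x u.
Local Notation L := (triv_line x u).

Lemma triv_line_forall (Q : bigT -> Prop) :
  Q (embP P' x) -> Q (embPair x u) -> Q (embP' P u) -> forall q, q \in L -> Q q.
Proof. by move=> ? ? ? q; rewrite in_set3 => /or3P[]/eqP->. Qed.

Lemma nearest_from_P a : embP P' a \notin L -> unique_nearest L (embP P' a).
Proof.
move=> aNL; have ax : a != x by apply: contraNneq aNL => ->; rewrite in_set3 eqxx.
have [au|aNu] := boolP (calP a u).
  apply: (unique_nearest_at1 aNL (p := embP' P u)) => //.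
    by rewrite in_set3 eqxx !orbT.
  by apply: triv_line_forall; rewrite ?eqxx //= ?(negbTE ax).
have [w wa wx] := exists_common_perp HS' (f a) (f x).
apply: (unique_nearest_at2 aNL (beta := embP' P w) (p := embP P' x)).
- by rewrite in_set3 eqxx.
- exact: wa.
- exact: wx.
apply: triv_line_forall; rewrite ?eqxx //= ?(negbTE ax) ?(negbTE aNu) /= => _.
  by apply: contra aNu => /adj2_P_pair.
by apply: contra aNu => /adj2_P_P'.
Qed.

Lemma nearest_from_P' v : embP' P v \notin L -> unique_nearest L (embP' P v).
Proof.
move=> vNL; have vu : v != u by apply: contraNneq vNL => ->; rewrite in_set3 eqxx !orbT.
have [xv|xNv] := boolP (calP x v).
  apply: (unique_nearest_at1 vNL (p := embP P' x)); [by rewrite in_set3 eqxx | exact: xv |].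
  by apply: triv_line_forall; rewrite ?eqxx //= ?(negbTE vu).
have [[g _ gK] _] := Hf.
have [w wv wu] := exists_common_perp HS' v u.
apply: (unique_nearest_at2 vNL (beta := embP P' (g w)) (p := embP' P u)).
- by rewrite in_set3 eqxx !orbT.
- by rewrite /= /Defs.calP gK perp_sym.
- by rewrite /= /Defs.calP gK perp_sym.
apply: triv_line_forall; rewrite ?eqxx //= ?(negbTE vu) ?(negbTE xNv) /= => _.
  by apply: contra xNv => /adj2_P'_P.
by apply: contra xNv => /adj2_P'_pair.
Qed.

Lemma mem_triv_line_pair a v : (embPair a v \in L) = (a == x) && (v == u).
Proof. by rewrite in_set3 -!sum_eqE /= xpair_eqE orbF. Qed.

Lemma nearest_from_pair_fst v : calP x v -> v != u -> unique_nearest L (embPair x v).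
Proof.
move=> xv vu; have vNL : embPair x v \notin L by rewrite mem_triv_line_pair eqxx.
apply: (unique_nearest_at1 vNL (p := embP P' x)).
- by rewrite in_set3 eqxx.
- by rewrite /= eqxx.
by apply: triv_line_forall; rewrite ?eqxx //= ?eqxx ?(eq_sym u) ?(negbTE vu).
Qed.

Lemma nearest_from_pair_snd a : calP a u -> a != x -> unique_nearest L (embPair a u).
Proof.
move=> au ax; have aNL : embPair a u \notin L by rewrite mem_triv_line_pair (negbTE ax).
apply: (unique_nearest_at1 aNL (p := embP' P u)).
- by rewrite in_set3 eqxx !orbT.
- by rewrite /= eqxx.
by apply: triv_line_forall; rewrite ?eqxx //= ?eqxx /= ?andbF // eq_sym (negbTE ax).
Qed.

Lemma exists_pair_between a v : calP a v -> ~~ calP x v -> ~~ calP a u ->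
  exists b w, adj (embPair a v) (embPair b w) && adj (embPair b w) (embPair x u).
Proof.
move=> av xNv aNu; have [[g _ gK] _] := Hf.
have [l lL /andP[xl ul]] : exists2 l, l \in Ls' & (f x \in l) && (u \in l).
  have [->|ux] := eqVneq u (f x).
    by have [l lL xl] := exists_line_at HS' (f x); exists l; rewrite ?xl.
  exact/line_of_coll/perp_coll.
have [w wl aw] : exists2 w, w \in l & calP a w := exists_perp_on_line HS' (f a) lL.
have [b' bl vb] := exists_perp_on_line HS' v lL.
have bv : calP (g b') v by rewrite /Defs.calP gK perp_sym.
have bw : calP (g b') w by rewrite /Defs.calP gK (line_perp lL bl wl).
have bu : calP (g b') u by rewrite /Defs.calP gK (line_perp lL bl ul).
have xw : calP x w := line_perp lL xl wl.
have ab : a != g b' by apply: contraNneq aNu => ->.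
have vw : v != w by apply: contraNneq xNv => ->.
have bx : g b' != x by apply: contraNneq xNv => <-.
have wu : w != u by apply: contraNneq aNu => <-.
by exists (g b'), w; rewrite /= ab vw av bv aw bw bx wu xw bu xu.
Qed.

Lemma nearest_from_pair_neq a v : calP a v -> a != x -> v != u ->
  unique_nearest L (embPair a v).
Proof.
move=> av ax vu; have aNL : embPair a v \notin L by rewrite mem_triv_line_pair (negbTE ax).
have xa : x != a by rewrite eq_sym.
have uv : u != v by rewrite eq_sym.
have [xv|xNv] := boolP (calP x v); have [au|aNu] := boolP (calP a u).
- apply: (unique_nearest_at1 aNL (p := embPair x u)); first by rewrite in_set3 eqxx orbT.
    by rewrite /= ax vu av xv au xu.
  by apply: triv_line_forall; rewrite ?eqxx //= ?(negbTE xa) ?(negbTE uv).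
- apply: (unique_nearest_at2 aNL (beta := embP' P v) (p := embP P' x)).
  + by rewrite in_set3 eqxx.
  + by rewrite /= eqxx.
  + exact: xv.
  apply: triv_line_forall; rewrite ?eqxx //= ?(negbTE aNu) ?(negbTE uv) ?andbF /= => _.
    by apply: contra aNu => /adj2_pair_pair ->.
  by apply: contra aNu => /adj2_pair_P'.
- apply: (unique_nearest_at2 aNL (beta := embP P' a) (p := embP' P u)).
  + by rewrite in_set3 eqxx !orbT.
  + by rewrite /= eqxx.
  + exact: au.
  apply: triv_line_forall; rewrite ?eqxx //= ?(negbTE xNv) ?(negbTE xa) ?andbF /= => _.
    by apply: contra xNv => /adj2_pair_P.
  by apply: contra xNv => /adj2_pair_pair <-.
have [b [w /andP[adj_ab adj_bx]]] := exists_pair_between av xNv aNu.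
apply: (unique_nearest_at2 aNL _ adj_ab adj_bx); first by rewrite in_set3 eqxx orbT.
apply: triv_line_forall; rewrite ?eqxx //= ?(negbTE xa) ?(negbTE uv) /= => _.
  by apply: contra xNv => /adj2_pair_P.
by apply: contra aNu => /adj2_pair_P'.
Qed.

Lemma nearest_from_pair a v : calP a v -> embPair a v \notin L ->
  unique_nearest L (embPair a v).
Proof.
rewrite mem_triv_line_pair; have [-> xv|ax av _] := eqVneq a x.
  by apply: nearest_from_pair_fst.
have [vu_eq|vu] := eqVneq v u; last exact: nearest_from_pair_neq.
by rewrite vu_eq in av *; apply: nearest_from_pair_snd.
Qed.

End TrivialLine.

End Distance.

Theorem proposition4p6 (P P' : finType) (Ls : {set {set P}}) (Ls' : {set {set P'}})
  (f : P -> P') (HS : is_gq22 Ls) (HS' : is_gq22 Ls') (Hf : is_iso Ls Ls' f)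
  (x : P) (u : P') (Hxu : calP Ls' f x u) (alpha : bigT P P') :
  isPt Ls' f alpha -> alpha \notin triv_line x u ->
  exists! p : bigT P P', p \in triv_line x u /\
    forall q, q \in triv_line x u -> dist_leq Ls Ls' f alpha p q.
Proof.
case: alpha => [[a|v]|[a v]] alphaP alphaNL.
- exact: (nearest_from_P HS' Hf (a := a) alphaNL).
- exact: (nearest_from_P' HS' Hf (v := v) alphaNL).
- exact: (nearest_from_pair HS' Hf Hxu (a := a) (v := v) alphaP alphaNL).
Qed.
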